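(* Let $R$ be a binary relation on a set $A$. Then (1) $\mathbf{Inc}(R)$ implies $\mathbf{RP}(R)$, and (2) $\mathbf{RP}(R)$ holds if and only if $\mathbf{RP}^{-}(R)$ holds. (Constructively.)
   Context: Work in constructive (intuitionistic) logic / Martin-Löf type theory without excluded middle or other axioms. Let $R$ be a binary relation on a set $A$; write $a\to b$ for $R\,a\,b$ and $\to^*$ for its reflexive–transitive closure. A sequence is a function $s:\mathbb{N}\to A$; it is $R$-increasing if $s(k)\to s(k+1)$ for all $k$. An element $b$ is an $s$-bound if $s(i)\to^* b$ for all $i$; $s$ is bounded if some $s$-bound exists. $\mathbf{Inc}(R)$: there is a function $|\cdot|:A\to\mathbb{N}$ with $a\to b \Rightarrow |a|<|b|$ for all $a,b$. $\mathbf{RP}(R)$: for every bounded $R$-increasing sequence $s$ there is $i\in\mathbb{N}$ such that for all $x\in A$, $s(i)\to^* x$ implies $x\to^* s(i)$. $\mathbf{RP}^{-}(R)$: for every $R$-increasing sequence $s$ and every $s$-bound $b$ there is $i\in\mathbb{N}$ with $b\to^* s(i)$. *)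

From Stdlib Require Import Relations Arith.

Section RPdefs.
Context {A : Type} (R : A -> A -> Prop).

Definition rt : A -> A -> Prop := clos_refl_trans A R.

Definition R_increasing (s : nat -> A) : Prop := forall k, R (s k) (s (S k)).

Definition is_bound (s : nat -> A) (b : A) : Prop := forall i, rt (s i) b.

Definition bounded (s : nat -> A) : Prop := exists b, is_bound s b.

Definition Inc : Prop :=
  exists f : A -> nat, forall a b, R a b -> f a < f b.

Definition RP : Prop :=
  forall s : nat -> A, bounded s -> R_increasing s ->
    exists i, forall x, rt (s i) x -> rt x (s i).

Definition RPminus : Prop :=
  forall s : nat -> A, R_increasing s -> forall b, is_bound s b ->
    exists i, rt b (s i).
End RPdefs.

(* Under Inc the rank |s k| of an R-increasing sequence is at least k, while every
   s-bound b satisfies |s k| <= |b|; so no bounded increasing sequence exists and RP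
   holds vacuously.  RP gives RP^- by applying it at the bound itself; conversely,
   anything above a bound is again a bound, and RP^- brings both back below the
   sequence, which yields RP. *)

From Stdlib Require Import Relations Arith Lia.

Section ReachabilityProperties.
Context {A : Type} (R : A -> A -> Prop).

Lemma rt_rank_le (f : A -> nat) :
  (forall a b, R a b -> f a < f b) -> forall a b, rt R a b -> f a <= f b.
Proof.
  intros Hf a b Hab.
  induction Hab as [a b Hab | a | a b c _ IHab _ IHbc].
  - apply Nat.lt_le_incl, Hf, Hab.
  - reflexivity.
  - lia.
Qed.

Lemma increasing_rank_ge (f : A -> nat) (s : nat -> A) :
  (forall a b, R a b -> f a < f b) -> R_increasing R s -> forall k, k <= f (s k).
Proof.
  intros Hf Hs k.
  induction k as [|k IHk]; [lia|].
  specialize (Hf _ _ (Hs k)); lia.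
Qed.

Lemma Inc_not_bounded_increasing (s : nat -> A) :
  Inc R -> bounded R s -> ~ R_increasing R s.
Proof.
  intros [f Hf] [b Hb] Hs.
  pose proof (rt_rank_le f Hf _ _ (Hb (S (f b)))) as Hle.
  pose proof (increasing_rank_ge f s Hf Hs (S (f b))).
  lia.
Qed.

Lemma Inc_RP : Inc R -> RP R.
Proof.
  intros HInc s Hbd Hs.
  exfalso; exact (Inc_not_bounded_increasing s HInc Hbd Hs).
Qed.

Lemma RP_RPminus : RP R -> RPminus R.
Proof.
  intros HRP s Hs b Hb.
  destruct (HRP s (ex_intro _ b Hb) Hs) as [i Hi].
  exists i; apply Hi, Hb.
Qed.

Lemma is_bound_rt (s : nat -> A) (b x : A) :
  is_bound R s b -> rt R b x -> is_bound R s x.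
Proof.
  intros Hb Hbx j.
  eapply rt_trans; [apply Hb | exact Hbx].
Qed.

Lemma RPminus_RP : RPminus R -> RP R.
Proof.
  intros HRPm s [b Hb] Hs.
  destruct (HRPm s Hs b Hb) as [i Hbi].
  exists i; intros x Hix.
  destruct (HRPm s Hs x (is_bound_rt s b x Hb (rt_trans _ _ _ _ _ Hbi Hix)))
    as [j Hxj].
  eapply rt_trans; [exact Hxj |].
  eapply rt_trans; [apply Hb | exact Hbi].
Qed.

End ReachabilityProperties.

Theorem mainTheorem2 (A : Type) (R : A -> A -> Prop) :
  (Inc R -> RP R) /\ (RP R <-> RPminus R).
Proof.
  split; [exact (Inc_RP R) |].
  split; [exact (RP_RPminus R) | exact (RPminus_RP R)].
Qed.
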